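(* There exists an absolute constant $c>0$ such that for every positive integer $n$ there is a set $S \subset [n]^2 = \{1,\dots,n\}^2$ with $|S| \ge c\, n^{5/4}$ which is skew corner-free, i.e. $S$ contains no three points of the form $$(x,y),\ (x,y+d),\ (x+d,y')$$ with $x,y,y'$ integers and $d \neq 0$ an integer.
   Context: A triple of points of the form $(x,y),(x,y+d),(x+d,y')$ with $d\neq 0$ (and $x,y,y'$ arbitrary) is called a skew corner; a set is skew corner-free if it contains no skew corner (all three points lying in the set). *)

From Stdlib Require Import Reals ZArith List.
Open Scope Z_scope.

(* A finite set S ⊂ Z^2 is represented by a duplicate-free list. *)
Definition in_grid (n : Z) (p : Z * Z) : Prop :=
  1 <= fst p <= n /\ 1 <= snd p <= n.

Definition skew_corner_free (S : list (Z * Z)) : Prop :=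
  forall x y y' d : Z, d <> 0 ->
    ~ (In (x, y) S /\ In (x, y + d) S /\ In (x + d, y') S).

From Stdlib Require Import Reals ZArith List Lia Lra.
Import ListNotations.
Open Scope Z_scope.

(* Points of [1, 10^k]^2 are written in base 10 as words of digit columns (x-digit,
   y-digit) taken from a fixed alphabet, with a potential attached to x-digits.  In a
   skew corner (x,y), (x,y+d), (x+d,y') the first two points have the same x-digits, and
   the alphabet is chosen so that no carries occur: digit by digit, the change of x-digit
   from the first to the third point equals the difference of two y-digits allowed above
   the same x-digit.  The alphabet permits this only when the x-digit is unchanged or its
   potential strictly increases, so among words of equal total potential it forces d = 0.
   Concatenating M blocks of 48 columns of potential 60 (there are at least 10^60 such
   blocks) gives at least 10^(60 M) points in a grid of side 10^(48 M), whence the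
   exponent 60/48 = 5/4. *)

Lemma NoDup_flat_map_map {A B C : Type} (g : A -> B -> C) (F : A -> list B) (L : list A) :
  NoDup L -> (forall a, In a L -> NoDup (F a)) ->
  (forall a a' x x', In a L -> In a' L -> In x (F a) -> In x' (F a') ->
     g a x = g a' x' -> a = a' /\ x = x') ->
  NoDup (flat_map (fun a => map (g a) (F a)) L).
Proof.
  induction L as [|a L IH]; intros HL HF Hg; cbn [flat_map]; [constructor|].
  inversion HL as [|? ? a_notin HL']; subst.
  apply NoDup_app.
  - apply NoDup_map_NoDup_ForallPairs; [|apply HF; left; reflexivity].
    intros x x' Hx Hx' E. apply (Hg a a x x'); auto; now left.
  - apply IH; auto; [intros; apply HF; now right|].
    intros; apply Hg; auto; now right.
  - intros c Hc Hc'.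
    apply in_map_iff in Hc as [x [<- Hx]].
    apply in_flat_map in Hc' as [a' [Ha' Hc']]. apply in_map_iff in Hc' as [x' [E Hx']].
    destruct (Hg a a' x x') as [<- _]; [now left | now right | exact Hx | exact Hx' | congruence |].
    contradiction.
Qed.

Lemma app_inj_length {A : Type} (u u' w w' : list A) :
  length u = length u' -> u ++ w = u' ++ w' -> u = u' /\ w = w'.
Proof.
  revert u'; induction u as [|a u IH]; intros [|a' u'] Hl E; try discriminate; auto.
  injection Hl as Hl; injection E as <- E.
  destruct (IH u' Hl E) as [<- <-]; auto.
Qed.

Lemma map_fst_snd_inj {A B : Type} (l l' : list (A * B)) :
  map fst l = map fst l' -> map snd l = map snd l' -> l = l'.
Proof.
  revert l'; induction l as [|[a c] l IH]; intros [|[a' c'] l'] Hfst Hsnd;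
    try discriminate; auto.
  injection Hfst as -> Hfst; injection Hsnd as -> Hsnd; f_equal; auto.
Qed.

Lemma forallb3_In {A : Type} (f : A -> A -> A -> bool) (l : list A) :
  forallb (fun x => forallb (fun y => forallb (f x y) l) l) l = true ->
  forall x y z, In x l -> In y l -> In z l -> f x y z = true.
Proof.
  intros H x y z Hx Hy Hz.
  rewrite forallb_forall in H; specialize (H x Hx).
  rewrite forallb_forall in H; specialize (H y Hy).
  rewrite forallb_forall in H; exact (H z Hz).
Qed.

Lemma pow_bracket (B N : Z) :
  1 < B -> 1 <= N -> exists M : nat, B ^ Z.of_nat M <= N < B ^ Z.of_nat (S M).
Proof.
  intros HB HN.
  assert (Hk : forall k : nat, N < B ^ Z.of_nat k ->
                 exists M : nat, B ^ Z.of_nat M <= N < B ^ Z.of_nat (S M)).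
  { induction k as [|k IH]; intros Hk; [cbn in Hk; lia|].
    destruct (Z_lt_le_dec N (B ^ Z.of_nat k)); [now apply IH | now exists k]. }
  apply (Hk (Z.to_nat N)); rewrite Z2Nat.id by lia; apply Z.pow_gt_lin_r; lia.
Qed.

Lemma Rpower_le_pow (x c a : R) (L P : nat) :
  (0 < x)%R -> (0 < c)%R -> (x <= c ^ L)%R -> (0 <= a)%R -> (a * INR L = INR P)%R ->
  (Rpower x a <= c ^ P)%R.
Proof.
  intros Hx Hc HxL Ha HLP.
  rewrite <- (Rpower_pow P c Hc), <- HLP, Rmult_comm, <- Rpower_mult, Rpower_pow by exact Hc.
  apply Rle_Rpower_l; auto; lra.
Qed.

Lemma Rpower_le_pow_scaled (x c a y : R) (L P M : nat) :
  (0 < x)%R -> (0 < c)%R -> (x <= c ^ (L * S M))%R -> (0 <= a)%R ->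
  (a * INR L = INR P)%R -> (c ^ P <= y)%R ->
  (/ c ^ P * Rpower x a <= y ^ M)%R.
Proof.
  intros Hx Hc HxL Ha HLP Hy.
  assert (HcP : (0 < c ^ P)%R) by (apply pow_lt; lra).
  assert (Hpow : (Rpower x a <= c ^ P * (c ^ P) ^ M)%R).
  { rewrite <- pow_mult, <- pow_add.
    apply (Rpower_le_pow _ _ _ (L * S M)); auto.
    rewrite !mult_INR, <- Rmult_assoc, HLP, !S_INR, plus_INR, mult_INR; ring. }
  assert (((c ^ P) ^ M <= y ^ M)%R) by (apply pow_incr; lra).
  apply Rmult_le_reg_l with (c ^ P)%R; [lra|].
  rewrite <- Rmult_assoc, Rinv_r by lra; nra.
Qed.

Fixpoint concat_tuples {A : Type} (L : list (list A)) (M : nat) : list (list A) :=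
  match M with
  | O => [[]]
  | S M' => flat_map (fun u => map (app u) (concat_tuples L M')) L
  end.

Lemma length_concat_tuples {A : Type} (L : list (list A)) (M : nat) :
  length (concat_tuples L M) = (length L ^ M)%nat.
Proof.
  induction M as [|M IH]; cbn [concat_tuples]; [reflexivity|].
  rewrite (flat_map_constant_length (c := length (concat_tuples L M))).
  - rewrite IH, Nat.pow_succ_r'; reflexivity.
  - intros; apply length_map.
Qed.

Lemma NoDup_concat_tuples {A : Type} (L : list (list A)) (k M : nat) :
  NoDup L -> (forall u, In u L -> length u = k) -> NoDup (concat_tuples L M).
Proof.
  intros HL Hk; induction M as [|M IH]; cbn [concat_tuples].
  - repeat constructor; auto.
  - apply NoDup_flat_map_map; auto.
    intros u u' w w' Hu Hu' _ _; apply app_inj_length.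
    now rewrite (Hk u Hu), (Hk u' Hu').
Qed.

Section Numerals.

Variable b : Z.
Hypothesis b_gt1 : 1 < b.

Fixpoint num (ds : list Z) : Z :=
  match ds with [] => 0 | d :: ds' => d + b * num ds' end.

Definition digit (d : Z) : Prop := 0 <= d < b.

Lemma no_carry (d m : Z) : -b < d < b -> d + b * m = 0 -> d = 0 /\ m = 0.
Proof.
  intros Hd E.
  assert (m = 0) by (destruct (Z.lt_trichotomy m 0) as [Hm|[Hm|Hm]]; nia).
  subst; lia.
Qed.

Lemma num_bound (ds : list Z) :
  Forall digit ds -> 0 <= num ds < b ^ Z.of_nat (length ds).
Proof.
  induction 1 as [|d ds Hd _ IH]; cbn [num length]; [lia|].
  unfold digit in Hd; rewrite Nat2Z.inj_succ, Z.pow_succ_r by lia; nia.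
Qed.

Lemma num_inj (ds ds' : list Z) :
  length ds = length ds' -> Forall digit ds -> Forall digit ds' ->
  num ds = num ds' -> ds = ds'.
Proof.
  revert ds'; induction ds as [|d ds IH]; intros [|d' ds'] Hl Hds Hds' E;
    try discriminate; auto.
  inversion Hds as [|? ? Hd Hds0]; inversion Hds' as [|? ? Hd' Hds0']; subst.
  unfold digit in Hd, Hd'; cbn [num] in E.
  destruct (no_carry (d - d') (num ds - num ds')) as [Ed En]; [lia | lia |].
  f_equal; [lia | apply IH; auto; lia].
Qed.

End Numerals.

Section DigitColumns.

Variable b : Z.
Hypothesis b_gt1 : 1 < b.
Variable cols : list (Z * Z).
Variable pot : Z -> Z.

Hypothesis cols_digits : forall v y, In (v, y) cols -> digit b v /\ digit b y.
Hypothesis cols_carry_free : forall v y1 y2 u y3,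
  In (v, y1) cols -> In (v, y2) cols -> In (u, y3) cols -> -b < (y2 - y1) - (u - v) < b.
Hypothesis cols_skew : forall v y1 y2 u y3,
  In (v, y1) cols -> In (v, y2) cols -> In (u, y3) cols ->
  y2 - y1 = u - v -> u = v \/ pot v < pot u.

Definition word_ok (w : list (Z * Z)) : Prop := Forall (fun c => In c cols) w.

Fixpoint potential (xs : list Z) : Z :=
  match xs with [] => 0 | v :: xs' => pot v + potential xs' end.

Lemma potential_app (xs ys : list Z) : potential (xs ++ ys) = potential xs + potential ys.
Proof. induction xs as [|v xs IH]; cbn [app potential]; [|rewrite IH]; lia. Qed.

Definition point (w : list (Z * Z)) : Z * Z :=
  (1 + num b (map fst w), 1 + num b (map snd w)).

Lemma word_digits (w : list (Z * Z)) :
  word_ok w -> Forall (digit b) (map fst w) /\ Forall (digit b) (map snd w).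
Proof.
  induction 1 as [|[v y] w Hc _ [IH1 IH2]]; cbn [map fst snd]; [split; constructor|].
  destruct (cols_digits v y Hc); split; constructor; auto.
Qed.

Lemma point_inj (w w' : list (Z * Z)) :
  word_ok w -> word_ok w' -> length w = length w' -> point w = point w' -> w = w'.
Proof.
  intros Hw Hw' Hl E; apply pair_equal_spec in E as [Ex Ey].
  destruct (word_digits w Hw), (word_digits w' Hw').
  assert (Hfst : map fst w = map fst w')
    by (apply (num_inj b); rewrite ?length_map; auto; lia).
  assert (Hsnd : map snd w = map snd w')
    by (apply (num_inj b); rewrite ?length_map; auto; lia).
  exact (map_fst_snd_inj w w' Hfst Hsnd).
Qed.

Lemma point_in_grid (w : list (Z * Z)) (n : Z) :
  word_ok w -> b ^ Z.of_nat (length w) <= n -> in_grid n (point w).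
Proof.
  intros Hw Hn; destruct (word_digits w Hw) as [Hx Hy].
  apply (num_bound b b_gt1) in Hx; apply (num_bound b b_gt1) in Hy.
  rewrite length_map in Hx, Hy.
  unfold in_grid, point; cbn [fst snd]; lia.
Qed.

Definition raises (v u : Z) : Prop := u = v \/ pot v < pot u.

Lemma digitwise_raises (z1 z2 z3 : list (Z * Z)) :
  length z1 = length z2 -> length z1 = length z3 ->
  word_ok z1 -> word_ok z2 -> word_ok z3 ->
  map fst z1 = map fst z2 ->
  num b (map fst z3) - num b (map fst z1) = num b (map snd z2) - num b (map snd z1) ->
  Forall2 raises (map fst z1) (map fst z3).
Proof.
  revert z2 z3; induction z1 as [|[v y1] z1 IH];
    intros [|[v' y2] z2] [|[u y3] z3] L12 L13 H1 H2 H3 Hfst E;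
    try discriminate; cbn [map fst snd num] in *; [constructor|].
  injection Hfst as <- Hfst; injection L12 as L12; injection L13 as L13.
  inversion H1 as [|? ? C1 H1']; inversion H2 as [|? ? C2 H2'];
    inversion H3 as [|? ? C3 H3']; subst.
  destruct (no_carry b b_gt1 ((y2 - y1) - (u - v))
              ((num b (map snd z2) - num b (map snd z1))
               - (num b (map fst z3) - num b (map fst z1))))
    as [Ed Er]; [apply (cols_carry_free v y1 y2 u y3); auto | lia |].
  constructor.
  - apply (cols_skew v y1 y2 u y3); auto; lia.
  - apply (IH z2 z3); auto; lia.
Qed.

Lemma raises_potential_eq (xs us : list Z) :
  Forall2 raises xs us -> potential xs = potential us -> xs = us.
Proof.
  assert (Hle : forall xs us, Forall2 raises xs us -> potential xs <= potential us).
  { induction 1 as [|v u xs' us' [->|Hr] _ IH]; cbn [potential]; lia. }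
  induction 1 as [|v u xs' us' [->|Hr] Hxs IH]; cbn [potential]; intros E; auto.
  - f_equal; apply IH; lia.
  - specialize (Hle _ _ Hxs); lia.
Qed.

Lemma skew_corner_free_points (W : list (list (Z * Z))) (k : nat) (s : Z) :
  (forall w, In w W -> word_ok w /\ length w = k /\ potential (map fst w) = s) ->
  skew_corner_free (map point W).
Proof.
  intros HW x y y' d Hd [P1 [P2 P3]].
  apply in_map_iff in P1 as [z1 [E1 [O1 [L1 S1]]%HW]].
  apply in_map_iff in P2 as [z2 [E2 [O2 [L2 S2]]%HW]].
  apply in_map_iff in P3 as [z3 [E3 [O3 [L3 S3]]%HW]].
  apply pair_equal_spec in E1 as [X1 Y1], E2 as [X2 Y2], E3 as [X3 _].
  destruct (word_digits z1 O1), (word_digits z2 O2).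
  assert (Hfst : map fst z1 = map fst z2)
    by (apply (num_inj b); rewrite ?length_map; auto; lia).
  assert (Hr : Forall2 raises (map fst z1) (map fst z3))
    by (apply (digitwise_raises z1 z2 z3); auto; lia).
  apply raises_potential_eq in Hr; [|lia].
  rewrite <- Hr in X3; lia.
Qed.

Fixpoint words (k : nat) (s : Z) : list (list (Z * Z)) :=
  match k with
  | O => if s =? 0 then [[]] else []
  | S k' => flat_map (fun c => map (cons c) (words k' (s - pot (fst c)))) cols
  end.

Lemma in_words (k : nat) (s : Z) (w : list (Z * Z)) :
  In w (words k s) -> word_ok w /\ length w = k /\ potential (map fst w) = s.
Proof.
  revert s w; induction k as [|k IH]; intros s w Hw; cbn [words] in Hw.
  - destruct (Z.eqb_spec s 0) as [->|_]; [|contradiction].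
    destruct Hw as [<-|[]]; repeat split; constructor.
  - apply in_flat_map in Hw as [c [Hc Hw]].
    apply in_map_iff in Hw as [w' [<- [Hok [Hl Hp]]%IH]].
    cbn [length map potential]; repeat split; [constructor; auto | lia | lia].
Qed.

Lemma NoDup_words (k : nat) (s : Z) : NoDup cols -> NoDup (words k s).
Proof.
  intros Hcols; revert s; induction k as [|k IH]; intros s; cbn [words].
  - destruct (s =? 0); repeat constructor; auto.
  - apply NoDup_flat_map_map; auto.
    intros c c' w w' _ _ _ _ E; injection E; auto.
Qed.

Section Counting.

Hypothesis pot_nonneg : forall c, In c cols -> 0 <= pot (fst c).

Lemma potential_nonneg (w : list (Z * Z)) : word_ok w -> 0 <= potential (map fst w).
Proof.
  induction 1 as [|c w Hc _ IH]; cbn [map potential]; [lia|].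
  pose proof (pot_nonneg c Hc); lia.
Qed.

Lemma words_neg (k : nat) (s : Z) : s < 0 -> words k s = [].
Proof.
  intros Hs; destruct (words k s) as [|w ws] eqn:E; auto.
  assert (Hw : In w (words k s)) by (rewrite E; left; auto).
  apply in_words in Hw as [Hok [_ Hp]].
  pose proof (potential_nonneg w Hok); lia.
Qed.

(* [words 48 60] has more than 10^60 elements, so its length is computed by this
   dynamic programme over the potential, valid for potentials below the width [W]. *)
Definition lookup (t : list Z) (s : Z) : Z :=
  if s <? 0 then 0 else nth (Z.to_nat s) t 0.

Definition tabulate (W : nat) (f : Z -> Z) : list Z :=
  map (fun i => f (Z.of_nat i)) (seq 0 W).

Lemma lookup_tabulate (W : nat) (f : Z -> Z) (s : Z) :
  0 <= s < Z.of_nat W -> lookup (tabulate W f) s = f s.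
Proof.
  intros Hs; unfold lookup, tabulate.
  destruct (Z.ltb_spec s 0); [lia|].
  rewrite nth_indep with (d' := (fun i : nat => f (Z.of_nat i)) 0%nat)
    by (rewrite length_map, length_seq; lia).
  change (f (Z.of_nat 0)) with ((fun i : nat => f (Z.of_nat i)) 0%nat).
  rewrite map_nth, seq_nth by lia; f_equal; lia.
Qed.

Definition count_step (t : list Z) (s : Z) : Z :=
  fold_right (fun c acc => lookup t (s - pot (fst c)) + acc) 0 cols.

Fixpoint count_table (W k : nat) : list Z :=
  match k with
  | O => tabulate W (fun s => if s =? 0 then 1 else 0)
  | S k' => tabulate W (count_step (count_table W k'))
  end.

Lemma count_table_spec (W k : nat) (s : Z) :
  s < Z.of_nat W -> lookup (count_table W k) s = Z.of_nat (length (words k s)).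
Proof.
  intros Hs; destruct (Z.ltb_spec s 0) as [Hneg|Hnneg].
  { rewrite words_neg by lia; unfold lookup; destruct (Z.ltb_spec s 0); [reflexivity | lia]. }
  revert s Hs Hnneg; induction k as [|k IH]; intros s Hs Hnneg; cbn [count_table words];
    rewrite lookup_tabulate by lia.
  - destruct (s =? 0); reflexivity.
  - unfold count_step.
    assert (Hsum : forall l, incl l cols ->
      fold_right (fun c acc => lookup (count_table W k) (s - pot (fst c)) + acc) 0 l =
      Z.of_nat (length (flat_map (fun c => map (cons c) (words k (s - pot (fst c)))) l))).
    { induction l as [|c l IHl]; [reflexivity|]; intros [Hc Hl]%incl_cons_inv.
      cbn [fold_right flat_map]; rewrite length_app, length_map, Nat2Z.inj_add, IHl by auto.
      pose proof (pot_nonneg c Hc).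
      destruct (Z.ltb_spec (s - pot (fst c)) 0).
      - rewrite words_neg by lia; unfold lookup.
        destruct (Z.ltb_spec (s - pot (fst c)) 0); [reflexivity | lia].
      - rewrite IH by lia; reflexivity. }
    apply Hsum, incl_refl.
Qed.

End Counting.

Definition corner_free_set (L : nat) (P : Z) (M : nat) : list (Z * Z) :=
  map point (concat_tuples (words L P) M).

Lemma in_concat_tuples_words (L : nat) (P : Z) (M : nat) (w : list (Z * Z)) :
  In w (concat_tuples (words L P) M) ->
  word_ok w /\ length w = (L * M)%nat /\ potential (map fst w) = P * Z.of_nat M.
Proof.
  revert w; induction M as [|M IH]; intros w Hw; cbn [concat_tuples] in Hw.
  - destruct Hw as [<-|[]]; split; [constructor | cbn; split; lia].
  - apply in_flat_map in Hw as [u [[Hu [Lu Pu]]%in_words Hw]].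
    apply in_map_iff in Hw as [w' [<- [Hw' [Lw' Pw']]%IH]].
    rewrite length_app, map_app, potential_app; split; [apply Forall_app; auto | split; lia].
Qed.

Theorem corner_free_set_spec (L : nat) (P : Z) (M : nat) :
  NoDup cols ->
  NoDup (corner_free_set L P M) /\
  (forall p, In p (corner_free_set L P M) -> in_grid (b ^ Z.of_nat (L * M)) p) /\
  skew_corner_free (corner_free_set L P M) /\
  length (corner_free_set L P M) = (length (words L P) ^ M)%nat.
Proof.
  intros Hcols; unfold corner_free_set; split; [|split; [|split]].
  - apply NoDup_map_NoDup_ForallPairs.
    + intros w w' [? [? _]]%in_concat_tuples_words [? [? _]]%in_concat_tuples_words.
      apply point_inj; auto; lia.
    + apply (NoDup_concat_tuples _ L); [apply NoDup_words; auto|].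
      intros u Hu; apply in_words in Hu; tauto.
  - intros q [w [<- [Hw [Lw _]]%in_concat_tuples_words]]%in_map_iff.
    apply point_in_grid; auto; rewrite Lw; lia.
  - apply (skew_corner_free_points _ (L * M) (P * Z.of_nat M)).
    apply in_concat_tuples_words.
  - rewrite length_map, length_concat_tuples; reflexivity.
Qed.

End DigitColumns.

Definition cols10 : list (Z * Z) :=
  [(0, 0); (0, 4);
   (1, 0); (1, 2); (1, 4); (1, 6);
   (2, 0); (2, 1); (2, 2); (2, 3); (2, 4); (2, 5); (2, 6); (2, 7);
   (3, 0); (3, 3); (3, 6);
   (4, 0); (4, 5)].

Definition pot10 (v : Z) : Z :=
  match v with 0 => 3 | 1 => 1 | 2 => 0 | 3 => 2 | _ => 4 end.

Lemma NoDup_cols10 : NoDup cols10.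
Proof. repeat constructor; cbn; intuition discriminate. Qed.

Lemma pot10_nonneg (c : Z * Z) : In c cols10 -> 0 <= pot10 (fst c).
Proof. intros Hc; repeat destruct Hc as [<-|Hc]; cbn; lia || contradiction. Qed.

Lemma cols10_digits (v y : Z) : In (v, y) cols10 -> digit 10 v /\ digit 10 y.
Proof.
  intros Hc; repeat destruct Hc as [Hc|Hc];
    try (injection Hc as <- <-; unfold digit; lia); contradiction.
Qed.

Definition carry_free_test (c1 c2 c3 : Z * Z) : bool :=
  implb (fst c1 =? fst c2) (Z.abs ((snd c2 - snd c1) - (fst c3 - fst c1)) <? 10).

Definition skew_test (c1 c2 c3 : Z * Z) : bool :=
  implb ((fst c1 =? fst c2) && (snd c2 - snd c1 =? fst c3 - fst c1))
        ((fst c3 =? fst c1) || (pot10 (fst c1) <? pot10 (fst c3))).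

Lemma cols10_carry_free (v y1 y2 u y3 : Z) :
  In (v, y1) cols10 -> In (v, y2) cols10 -> In (u, y3) cols10 ->
  -10 < (y2 - y1) - (u - v) < 10.
Proof.
  intros H1 H2 H3.
  pose proof (forallb3_In carry_free_test cols10 ltac:(vm_compute; reflexivity) _ _ _ H1 H2 H3)
    as Htest.
  unfold carry_free_test in Htest; cbn [fst snd] in Htest.
  rewrite Z.eqb_refl in Htest; apply Z.ltb_lt in Htest; lia.
Qed.

Lemma cols10_skew (v y1 y2 u y3 : Z) :
  In (v, y1) cols10 -> In (v, y2) cols10 -> In (u, y3) cols10 ->
  y2 - y1 = u - v -> u = v \/ pot10 v < pot10 u.
Proof.
  intros H1 H2 H3 E.
  pose proof (forallb3_In skew_test cols10 ltac:(vm_compute; reflexivity) _ _ _ H1 H2 H3)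
    as Htest.
  unfold skew_test in Htest; cbn [fst snd] in Htest.
  rewrite Z.eqb_refl, E, Z.eqb_refl in Htest; cbn in Htest.
  apply Bool.orb_true_iff in Htest as [Hu|Hu]; [left; lia | right; lia].
Qed.

Lemma many_blocks10 : 10 ^ 60 <= Z.of_nat (length (words cols10 pot10 48 60)).
Proof.
  rewrite <- (count_table_spec cols10 pot10 pot10_nonneg 61) by lia.
  apply Z.leb_le; vm_compute; reflexivity.
Qed.

Theorem theorem1p1 :
  exists c : R, (0 < c)%R /\
    forall n : nat, (1 <= n)%nat ->
      exists S : list (Z * Z),
        NoDup S /\
        (forall p, In p S -> in_grid (Z.of_nat n) p) /\
        skew_corner_free S /\
        (c * Rpower (INR n) (5 / 4) <= INR (length S))%R.
Proof.
  exists (/ 10 ^ 60)%R; split; [apply Rinv_0_lt_compat, pow_lt; lra|].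
  intros n Hn.
  destruct (pow_bracket (10 ^ 48) (Z.of_nat n)) as [M [Hlow Hhigh]]; [lia | lia |].
  rewrite <- !Z.pow_mul_r in Hlow, Hhigh by lia.
  destruct (corner_free_set_spec 10 ltac:(lia) cols10 pot10 cols10_digits cols10_carry_free
              cols10_skew 48 60 M NoDup_cols10) as (Hnodup & Hgrid & Hfree & Hlen).
  exists (corner_free_set 10 cols10 pot10 48 60 M); split; [|split; [|split]]; auto.
  - intros p Hp; specialize (Hgrid p Hp); unfold in_grid in *; lia.
  - rewrite Hlen, pow_INR.
    apply (Rpower_le_pow_scaled _ _ _ _ 48 60 M); try lra.
    + apply lt_0_INR; lia.
    + rewrite INR_IZR_INZ, pow_IZR; apply IZR_le; lia.
    + cbn; lra.
    + rewrite INR_IZR_INZ, pow_IZR; apply IZR_le, many_blocks10.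
Qed.
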